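(* Let $\tau_i\in\tau_H$ be a HI-task in the multi-rate fluid model with earliest completion window $k_i$. If $$\sum_{j:1\le j<k_i}\theta_{i,j}^H w_j\ \ge\ u_i^H\sum_{j:1\le j<k_i}w_j,\qquad \forall j:1\le j<k_i,\ \theta_{i,j}^H\le\theta_{i,j+1}^H,$$ $$\forall j:k_i\le j\le n_H,\ \theta_{i,j}^H\ge u_i^H,\qquad\text{and}\qquad \theta_i^H\ge u_i^H,$$ then every early transition job of $\tau_i$ meets its deadline in the HI-mode (receives $C_i^H$ units of execution by its deadline).
   Context: A dual-criticality implicit-deadline sporadic task system runs on $m$ identical processors. Each task $\tau_i$ has period and relative deadline $T_i>0$, criticality in $\{LO,HI\}$, and WCETs $C_i^L\le C_i^H$; $u_i^L=C_i^L/T_i\le1$, $u_i^H=C_i^H/T_i\le1$; $n_H$ is the number of HI-tasks. The system starts in LO-mode; the mode switch is the first instant a HI-task job $\tau_i$ has executed $C_i^L$ units without completing; afterwards (HI-mode) LO-task jobs are dropped and HI jobs need up to $C_i^H$ units by their deadlines. Multi-rate fluid model (rate $\theta$ = receiving $\theta\ell$ units of execution in any interval of length $\ell$): in LO-mode each job of $\tau_i$ executes at rate $\theta_i^L\in(0,1]$; with time measured from the mode switch, the transition period $[0,\sum_{j=1}^{n_H}w_j)$ is divided into consecutive windows of durations $w_1,\dots,w_{n_H}\ge0$, window $j$ being $[\sum_{l<j}w_l,\sum_{l\le j}w_l)$, in which each job of HI-task $\tau_i$ executes at rate $\theta_{i,j}^H\in[0,1]$; after the transition period at rate $\theta_i^H\in(0,1]$.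 By convention $\theta_{i,n_H+1}^H$ denotes $\theta_i^H$. The earliest completion window of $\tau_i$ is the largest index $k_i\in\{1,\dots,n_H+1\}$ with $\sum_{j:1\le j<k_i}w_j<T_i-C_i^L/\theta_i^L$. An early transition job of $\tau_i$ is a job of $\tau_i$ released after the mode switch at a time $t<\sum_{j:1\le j<k_i}w_j$ (relative to the mode switch). *)

From mathcomp Require Import all_boot all_order all_algebra.
Set Implicit Arguments. Unset Strict Implicit. Unset Printing Implicit Defensive.
Import Order.TTheory GRing.Theory Num.Theory.
Local Open Scope ring_scope.

Section Fluid.
Variable R : realFieldType.

(* Start of window j (windows are 1-based): sum_{l : 1 <= l < j} w_l.
   Window j is [wstart w j, wstart w j.+1). *)
Definition wstart (w : nat -> R) (j : nat) : R := \sum_(1 <= l < j) w l.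

Definition overlap (a b c d : R) : R := Num.max 0 (Num.min b d - Num.max a c).

(* Execution received in HI-mode by a job of the task during the interval
   [a,b) (time measured from the mode switch, 0 <= a): rate thH j in window j
   (1 <= j <= nH), rate thF after the transition period. A rate theta means
   theta * l units in any interval of length l. *)
Definition hi_exec (nH : nat) (w thH : nat -> R) (thF : R) (a b : R) : R :=
  \sum_(1 <= j < nH.+1) thH j * overlap a b (wstart w j) (wstart w j.+1)
  + thF * Num.max 0 (b - Num.max a (wstart w nH.+1)).

Definition is_ecw (nH : nat) (w : nat -> R) (T CL thL : R) (k : nat) : Prop :=
  [/\ (1 <= k <= nH.+1)%N, wstart w k < T - CL / thL &
      forall k', (1 <= k' <= nH.+1)%N -> wstart w k' < T - CL / thL -> (k' <= k)%N].

End Fluid.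

(** The HI-mode execution of a job released at [t] inside the transition
    period splits at the start [s_k] of its earliest completion window.
    After [s_k] every rate is at least [u = CH / T], so that part contributes
    at least [u (t + T - s_k)].  Before [s_k] the job sees exactly the part of
    the windows [1 .. k-1] lying after [t]; since these rates are
    nondecreasing, the mean rate over that suffix is at least the mean rate
    over all of [[0, s_k)], which is at least [u] by hypothesis.  Together
    the job receives at least [u T = CH]. *)

From mathcomp Require Import all_boot all_order all_algebra.
From mathcomp Require Import lra zify.
Set Implicit Arguments. Unset Strict Implicit. Unset Printing Implicit Defensive.
Import Order.TTheory GRing.Theory Num.Theory.
Local Open Scope ring_scope.

Ltac case_minmax :=
  let atomic x := match x with
    | context [Order.max _ _] => fail 1
    | context [Order.min _ _] => fail 1
    | _ => idtac end in
  repeat match goal with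
  | |- context [Order.max ?x ?y] => atomic x; atomic y; case: (leP x y) => ?
  | |- context [Order.min ?x ?y] => atomic x; atomic y; case: (leP x y) => ?
  end; lra.

Section Overlap.
Variable R : realFieldType.
Implicit Types a b c d : R.

Lemma overlap_ge0 a b c d : 0 <= overlap a b c d.
Proof. by rewrite /overlap; case_minmax. Qed.

Lemma overlap_le a b c d : c <= d -> overlap a b c d <= d - c.
Proof. by rewrite /overlap => ?; case_minmax. Qed.

Lemma overlap_eq0 a b c d : d <= a -> overlap a b c d = 0.
Proof. by rewrite /overlap => ?; case_minmax. Qed.

Lemma overlap_full a b c d : a <= c -> c <= d -> d <= b -> overlap a b c d = d - c.
Proof. by rewrite /overlap => ? ? ?; case_minmax. Qed.

Lemma overlap_split a b c d : c <= d ->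
  overlap a b c d + Num.max 0 (b - Num.max a d) = Num.max 0 (b - Num.max a c).
Proof. by rewrite /overlap => ?; case_minmax. Qed.

End Overlap.

(* If [q] takes, out of the weights [w], nothing before the pivot and
   everything after it, then the [q]-weighted mean of a nondecreasing [r]
   is at least its [w]-weighted mean: compare both with [r piv]. *)
Lemma suffix_weighted_mean_ge (R : realFieldType) (r w q : nat -> R)
    (m n piv : nat) (u : R) :
  (forall i j, (m <= i)%N -> (i <= j < n)%N -> r i <= r j) ->
  (forall j, (m <= j < n)%N -> 0 <= q j <= w j) ->
  (forall j, (m <= j < piv)%N -> q j = 0) ->
  (forall j, (piv < j < n)%N -> q j = w j) ->
  (m <= piv < n)%N ->
  u * \sum_(m <= j < n) w j <= \sum_(m <= j < n) r j * w j ->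
  u * \sum_(m <= j < n) q j <= \sum_(m <= j < n) r j * q j.
Proof.
move=> r_mono qw q_before q_after /andP[m_piv piv_n] mean_w.
set rho := r piv.
have suffix_ge : rho * \sum_(m <= j < n) q j <= \sum_(m <= j < n) r j * q j.
  rewrite mulr_sumr -subr_ge0 -sumrB big_nat; apply: sumr_ge0 => j /andP[mj jn].
  have /andP[q_ge0 _] : 0 <= q j <= w j by apply: qw; rewrite mj.
  rewrite -mulrBl; case: (ltnP j piv) => [j_piv | piv_j].
    by rewrite q_before ?mulr0 // mj.
  by rewrite mulr_ge0 // subr_ge0 r_mono // piv_j.
have prefix_le : \sum_(m <= j < n) r j * (w j - q j)
    <= rho * \sum_(m <= j < n) (w j - q j).
  rewrite mulr_sumr -subr_ge0 -sumrB big_nat; apply: sumr_ge0 => j /andP[mj jn].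
  have /andP[_ q_le] : 0 <= q j <= w j by apply: qw; rewrite mj.
  rewrite -mulrBl; case: (leqP j piv) => [j_piv | piv_j].
    by rewrite mulr_ge0 // subr_ge0 // r_mono // j_piv.
  by rewrite q_after ?subrr ?mulr0 // piv_j.
have sum_q_ge0 : 0 <= \sum_(m <= j < n) q j.
  by rewrite big_nat; apply: sumr_ge0 => j /qw /andP[].
have sum_wq_ge0 : 0 <= \sum_(m <= j < n) (w j - q j).
  by rewrite big_nat; apply: sumr_ge0 => j /qw /andP[_]; rewrite subr_ge0.
have split_w : \sum_(m <= j < n) r j * w j
    = \sum_(m <= j < n) r j * q j + \sum_(m <= j < n) r j * (w j - q j).
  by rewrite -big_split; apply: eq_bigr => j _ /=; rewrite -mulrDr addrC subrK.
move: prefix_le; rewrite sumrB => prefix_le.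
case: (lerP u rho) => [u_rho | rho_u].
  by apply: le_trans suffix_ge; rewrite ler_wpM2r.
have : rho * (\sum_(m <= j < n) w j - \sum_(m <= j < n) q j)
    <= u * (\sum_(m <= j < n) w j - \sum_(m <= j < n) q j).
  by apply: ler_wpM2r; [rewrite -sumrB | exact: ltW].
lra.
Qed.

Lemma nondecreasing_in_range d (T : porderType d) (r : nat -> T) (m n : nat) :
  (forall j, (m <= j)%N -> (j.+1 < n)%N -> (r j <= r j.+1)%O) ->
  forall i j, (m <= i)%N -> (i <= j < n)%N -> (r i <= r j)%O.
Proof.
move=> r_step i j mi /andP[ij jn].
apply: (homo_leq_in (D := [pred l | (m <= l < n)%N]) (r := <=%O)) => //.
- exact: le_trans.
- by move=> a b; rewrite !inE => ? ? c; rewrite inE; lia.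
- by move=> l; rewrite !inE => /andP[ml _] /andP[_ l1n]; apply: r_step.
- by rewrite inE; lia.
- by rewrite inE; lia.
Qed.

Section Windows.
Variables (R : realFieldType) (w : nat -> R).
Local Notation s := (wstart w).

Lemma wstart1 : s 1 = 0.
Proof. by rewrite /wstart big_geq. Qed.

Lemma wstartS j : (0 < j)%N -> s j.+1 = s j + w j.
Proof. by move=> j_gt0; rewrite /wstart big_nat_recr. Qed.

Lemma wstart_le i j : (0 < i)%N -> (i <= j)%N ->
  (forall l, (i <= l < j)%N -> 0 <= w l) -> s i <= s j.
Proof.
move=> i_gt0 ij w_ge0; rewrite /wstart (big_cat_nat i_gt0 ij) /= lerDl big_nat.
exact: sumr_ge0.
Qed.

Lemma exists_window (t : R) (k : nat) : 0 <= t -> t < s k ->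
  exists2 p, (1 <= p < k)%N & s p <= t < s p.+1.
Proof.
move=> t_ge0; elim: k => [|k IHk] t_lt.
  by move: t_lt; rewrite /wstart big_geq //; lra.
case: (ltP t (s k)) => [/IHk [p /andP[p1 pk] tp] | sk_t].
  by exists p => //; rewrite p1 ltnS ltnW.
case: k IHk t_lt sk_t => [|k] _ t_lt sk_t.
  by move: t_lt; rewrite wstart1; lra.
by exists k.+1 => //; apply/andP.
Qed.

Lemma sum_overlap_windows (a b : R) (m n : nat) : (0 < m)%N -> (m <= n)%N ->
  (forall l, (m <= l < n)%N -> 0 <= w l) ->
  \sum_(m <= j < n) overlap a b (s j) (s j.+1) + Num.max 0 (b - Num.max a (s n))
  = Num.max 0 (b - Num.max a (s m)).
Proof.
move=> m_gt0; elim: n => [|n IHn] mn w_ge0.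
  by move: mn m_gt0; rewrite leqn0 => /eqP ->.
have [-> | m_neq] := eqVneq m n.+1; first by rewrite big_geq ?add0r.
rewrite big_nat_recr /=; last lia.
rewrite -addrA overlap_split; last by rewrite wstartS ?lerDl ?w_ge0; lia.
by apply: IHn => [|l ml]; [lia | apply: w_ge0; lia].
Qed.

Lemma exec_after_ge (thH : nat -> R) (thF u a b : R) (m n : nat) :
  (0 < m)%N -> (m <= n.+1)%N ->
  (forall l, (m <= l <= n)%N -> 0 <= w l) ->
  (forall j, (m <= j <= n)%N -> u <= thH j) -> u <= thF ->
  u * Num.max 0 (b - Num.max a (s m))
  <= \sum_(m <= j < n.+1) thH j * overlap a b (s j) (s j.+1)
     + thF * Num.max 0 (b - Num.max a (s n.+1)).
Proof.
move=> m_gt0 mn w_ge0 u_thH u_thF.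
rewrite -(sum_overlap_windows a b m_gt0 mn w_ge0).
rewrite mulrDr mulr_sumr lerD //.
- by rewrite !big_nat ler_sum // => j /u_thH u_j; rewrite ler_wpM2r ?overlap_ge0.
- by rewrite ler_wpM2r // le_max lexx.
Qed.

Lemma exec_before_ge (thH : nat -> R) (u t b : R) (k : nat) :
  (forall l, (1 <= l < k)%N -> 0 <= w l) ->
  (forall i j, (1 <= i)%N -> (i <= j < k)%N -> thH i <= thH j) ->
  0 <= t -> t < s k -> s k <= b ->
  u * s k <= \sum_(1 <= j < k) thH j * w j ->
  u * (s k - t) <= \sum_(1 <= j < k) thH j * overlap t b (s j) (s j.+1).
Proof.
move=> w_ge0 thH_mono t_ge0 t_sk sk_b mean_w.
have [p /andP[p1 pk] /andP[sp_t t_sp1]] := exists_window t_ge0 t_sk.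
have s_mono i j : (0 < i)%N -> (i <= j <= k)%N -> s i <= s j.
  by move=> i_gt0 /andP[ij jk]; apply: wstart_le => // l ?; apply: w_ge0; lia.
have sum_after : \sum_(1 <= j < k) overlap t b (s j) (s j.+1) = s k - t.
  have := sum_overlap_windows t b (isT : (0 < 1)%N) (ltnW (leq_ltn_trans p1 pk)) w_ge0.
  rewrite wstart1.
  have -> : Num.max 0 (b - Num.max t 0) = b - t by case_minmax.
  have -> : Num.max 0 (b - Num.max t (s k)) = b - s k by case_minmax.
  lra.
rewrite -sum_after; apply: (suffix_weighted_mean_ge (w := w) (piv := p)) => //.
- move=> j /andP[j1 jk]; rewrite overlap_ge0 /=.
  have -> : w j = s j.+1 - s j by rewrite wstartS //; lra.
  by rewrite overlap_le // s_mono //; lia.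
- move=> j /andP[j1 jp]; apply: overlap_eq0; apply: le_trans sp_t.
  by apply: s_mono; lia.
- move=> j /andP[pj jk]; rewrite overlap_full.
  + by rewrite wstartS; [lra | lia].
  + by apply: ltW (lt_le_trans t_sp1 _); apply: s_mono; lia.
  + by apply: s_mono; lia.
  + by apply: le_trans sk_b; apply: s_mono; lia.
- by rewrite p1.
Qed.

End Windows.

Theorem theorem2 (R : realFieldType) (nH : nat) (T CL CH thL thF : R)
    (w thH : nat -> R) (k : nat) (t : R) :
  (1 <= nH)%N ->
  0 < T -> 0 <= CL -> CL <= CH -> CL / T <= 1 -> CH / T <= 1 ->
  0 < thL <= 1 -> 0 < thF <= 1 ->
  (forall j, (1 <= j <= nH)%N -> 0 <= w j) ->
  (forall j, (1 <= j <= nH)%N -> 0 <= thH j <= 1) ->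
  is_ecw nH w T CL thL k ->
  (* hypotheses of the theorem *)
  \sum_(1 <= j < k) thH j * w j >= (CH / T) * \sum_(1 <= j < k) w j ->
  (forall j, (1 <= j < k)%N ->
     thH j <= (if (j.+1 <= nH)%N then thH j.+1 else thF)) ->
  (forall j, (k <= j <= nH)%N -> thH j >= CH / T) ->
  thF >= CH / T ->
  (* an early transition job released at t *)
  0 <= t -> t < wstart w k ->
  hi_exec nH w thH thF t (t + T) >= CH.
Proof.
move=> _ T_gt0 CL_ge0 _ _ _ /andP[thL_gt0 _] _ w_ge0 _ [/andP[k1 kn] sk_lt _]
  mean_w thH_step thH_tail thF_u t_ge0 t_sk.
have CH_uT : CH = CH / T * T by rewrite divfK // gt_eqF.
have sk_tT : wstart w k < t + T.
  have : 0 <= CL / thL by rewrite divr_ge0 // ltW.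
  lra.
have w_ge0_head l : (1 <= l < k)%N -> 0 <= w l.
  by move=> /andP[l1 lk]; rewrite w_ge0 // l1 -ltnS (leq_trans lk kn).
have w_ge0_tail l : (k <= l <= nH)%N -> 0 <= w l.
  by move=> /andP[kl ln]; rewrite w_ge0 // ln (leq_trans k1 kl).
have thH_mono : forall i j, (1 <= i)%N -> (i <= j < k)%N -> thH i <= thH j.
  apply: nondecreasing_in_range => j j1 jk.
  have jn : (j.+1 <= nH)%N by exact: leq_trans jk kn.
  by have := thH_step j; rewrite jn; apply; rewrite j1 ltnW.
have head := exec_before_ge w_ge0_head thH_mono t_ge0 t_sk (ltW sk_tT) mean_w.
have tail := exec_after_ge t (t + T) k1 kn w_ge0_tail thH_tail thF_u.
have tail_ge0 : 0 <= t + T - wstart w k by rewrite subr_ge0 ltW.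
rewrite (max_r (ltW t_sk)) (max_r tail_ge0) in tail.
rewrite /hi_exec (big_cat_nat k1 kn) /=; lra.
Qed.
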